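(* Let $x$ be a theory of $APAL_{int}$, $\varphi\in\mathcal{L}_{APAL_{int}}$ and $i$ an agent. If $K_i\varphi\notin x$, then there is a maximally consistent theory $y$ such that $K_ix\subseteq y$ and $\varphi\notin y$.
   Context: $\mathcal{L}_{APAL_{int}}$: $\varphi ::= p \mid \neg\varphi \mid \varphi\wedge\varphi \mid K_i\varphi \mid \mathrm{int}(\varphi)\mid [\varphi]\varphi\mid\Box\varphi$ over a countable $\mathit{Prop}$ and finite non-empty agent set $\mathcal{A}$; $\mathcal{L}_{PAL_{int}}$ its $\Box$-free fragment; $\bot:=p\wedge\neg p$. Necessity forms: $\xi(\sharp)::=\sharp\mid\varphi\to\xi(\sharp)\mid K_i\xi(\sharp)\mid\mathrm{int}(\xi(\sharp))\mid[\varphi]\xi(\sharp)$. $APAL_{int}$: axioms: propositional tautologies; $K_i(\varphi\to\psi)\to(K_i\varphi\to K_i\psi)$; $K_i\varphi\to\varphi$; $K_i\varphi\to K_iK_i\varphi$; $\neg K_i\varphi\to K_i\neg K_i\varphi$; $\mathrm{int}(\varphi\to\psi)\to(\mathrm{int}(\varphi)\to\mathrm{int}(\psi))$; $\mathrm{int}(\varphi)\to\varphi$; $\mathrm{int}(\varphi)\to\mathrm{int}(\mathrm{int}(\varphi))$; $K_i\varphi\to\mathrm{int}(\varphi)$; $[\varphi]p\leftrightarrow(\mathrm{int}(\varphi)\to p)$; $[\varphi]\neg\psi\leftrightarrow(\mathrm{int}(\varphi)\to\neg[\varphi]\psi)$; $[\varphi](\psi\wedge\chi)\leftrightarrow[\varphi]\psi\wedge[\varphi]\chi$;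 $[\varphi]\mathrm{int}(\psi)\leftrightarrow(\mathrm{int}(\varphi)\to\mathrm{int}([\varphi]\psi))$; $[\varphi]K_i\psi\leftrightarrow(\mathrm{int}(\varphi)\to K_i[\varphi]\psi)$; $[\varphi][\psi]\chi\leftrightarrow[\neg[\varphi]\neg\mathrm{int}(\psi)]\chi$; $\Box\varphi\to[\chi]\varphi$ ($\chi\in\mathcal{L}_{PAL_{int}}$). Rules: modus ponens; from $\varphi$ infer $K_i\varphi$; from $\varphi$ infer $\mathrm{int}(\varphi)$; from $\varphi$ infer $[\psi]\varphi$; (DR5) from $\xi([\psi]\chi)$ for all $\psi\in\mathcal{L}_{PAL_{int}}$ infer $\xi(\Box\chi)$. A theory is a set of formulas containing all theorems of $APAL_{int}$ and closed under modus ponens and (DR5); it is consistent iff $\bot\notin$ it; a set of formulas is consistent iff it is contained in a consistent theory; a theory is maximally consistent iff it is consistent and every set properly containing it is inconsistent. $K_ix:=\{\varphi\mid K_i\varphi\in x\}$. *)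

From Stdlib Require Import List.
Set Implicit Arguments.

Inductive form (A : Type) : Type :=
| Var : nat -> form A
| Neg : form A -> form A
| And : form A -> form A -> form A
| K : A -> form A -> form A
| Int : form A -> form A
| Ann : form A -> form A -> form A
| Box : form A -> form A.
Arguments Var {A} _.

Section Syntax.
Variable A : Type.

Definition Bot : form A := And (Var 0) (Neg (Var 0)).
Definition Imp (p q : form A) : form A := Neg (And p (Neg q)).
Definition Iff (p q : form A) : form A := And (Imp p q) (Imp q p).

Fixpoint boxfree (p : form A) : Prop :=
  match p with
  | Var _ => True
  | Neg q => boxfree q
  | And q r => boxfree q /\ boxfree r
  | K _ q => boxfree q
  | Int q => boxfree q
  | Ann q r => boxfree q /\ boxfree r
  | Box _ => False
  end.

Inductive nform : Type :=
| NHole : nform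
| NImp : form A -> nform -> nform
| NK : A -> nform -> nform
| NInt : nform -> nform
| NAnn : form A -> nform -> nform.

Fixpoint fill (xi : nform) (c : form A) : form A :=
  match xi with
  | NHole => c
  | NImp p xi' => Imp p (fill xi' c)
  | NK i xi' => K i (fill xi' c)
  | NInt xi' => Int (fill xi' c)
  | NAnn p xi' => Ann p (fill xi' c)
  end.

(* propositional tautologies: true under every assignment of truth values to
   the maximal non-Boolean subformulas *)
Fixpoint peval (v : form A -> bool) (p : form A) : bool :=
  match p with
  | Neg q => negb (peval v q)
  | And q r => andb (peval v q) (peval v r)
  | _ => v p
  end.
Definition tautology (p : form A) : Prop := forall v, peval v p = true.

Inductive thm : form A -> Prop :=
| ax_taut p : tautology p -> thm p
| ax_K i p q : thm (Imp (K i (Imp p q)) (Imp (K i p) (K i q)))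
| ax_T i p : thm (Imp (K i p) p)
| ax_4 i p : thm (Imp (K i p) (K i (K i p)))
| ax_5 i p : thm (Imp (Neg (K i p)) (K i (Neg (K i p))))
| ax_intK p q : thm (Imp (Int (Imp p q)) (Imp (Int p) (Int q)))
| ax_intT p : thm (Imp (Int p) p)
| ax_int4 p : thm (Imp (Int p) (Int (Int p)))
| ax_Kint i p : thm (Imp (K i p) (Int p))
| ax_Rp p n : thm (Iff (Ann p (Var n)) (Imp (Int p) (Var n)))
| ax_Rneg p q : thm (Iff (Ann p (Neg q)) (Imp (Int p) (Neg (Ann p q))))
| ax_Rand p q r : thm (Iff (Ann p (And q r)) (And (Ann p q) (Ann p r)))
| ax_Rint p q : thm (Iff (Ann p (Int q)) (Imp (Int p) (Int (Ann p q))))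
| ax_RK p i q : thm (Iff (Ann p (K i q)) (Imp (Int p) (K i (Ann p q))))
| ax_Rann p q r : thm (Iff (Ann p (Ann q r)) (Ann (Neg (Ann p (Neg (Int q)))) r))
| ax_Box p c : boxfree c -> thm (Imp (Box p) (Ann c p))
| r_mp p q : thm (Imp p q) -> thm p -> thm q
| r_necK i p : thm p -> thm (K i p)
| r_necInt p : thm p -> thm (Int p)
| r_necAnn q p : thm p -> thm (Ann q p)
| r_DR5 xi c : (forall q, boxfree q -> thm (fill xi (Ann q c))) -> thm (fill xi (Box c)).

Definition fset := form A -> Prop.

Definition theory (x : fset) : Prop :=
  (forall p, thm p -> x p) /\
  (forall p q, x (Imp p q) -> x p -> x q) /\
  (forall xi c, (forall q, boxfree q -> x (fill xi (Ann q c))) -> x (fill xi (Box c))).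

Definition consistent_theory (x : fset) : Prop := theory x /\ ~ x Bot.

Definition consistent_set (s : fset) : Prop :=
  exists x, consistent_theory x /\ (forall p, s p -> x p).

Definition maximally_consistent_theory (x : fset) : Prop :=
  consistent_theory x /\
  forall s : fset, (forall p, x p -> s p) -> (exists p, s p /\ ~ x p) -> ~ consistent_set s.

Definition Kset (i : A) (x : fset) : fset := fun p => x (K i p).

End Syntax.

From Stdlib Require Import List.
From Stdlib Require Import Arith FinFun Cantor Classical ClassicalEpsilon.
Set Implicit Arguments.

(* Since there are finitely many agents, the formulas (and necessity forms) are
   countable, so a Lindenbaum construction can run through every formula and
   every pair of a necessity form and a formula.  Starting from the single
   formula [~ phi], which is consistent with the theory [K_i x], we build a
   decreasing chain of formulas, each consistent with [K_i x], deciding at step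
   [n] the [n]-th formula and, for the [n]-th pair [(xi, chi)], either putting
   [xi(Box chi)] in or refuting one instance [xi([psi] chi)]; that one of these
   is always possible is exactly closure of [K_i x] under (DR5).  The formulas
   implied by some member of the chain form the required maximal theory. *)

Definition pair_nat (a b : nat) : nat := Cantor.to_nat (a, b).

Lemma pair_nat_inj a b c d : pair_nat a b = pair_nat c d -> a = c /\ b = d.
Proof.
  unfold pair_nat; intro H. assert (E := f_equal Cantor.of_nat H).
  rewrite !Cantor.cancel_of_to in E. inversion E; auto.
Qed.

Lemma finite_nat_injection (A : Type) : Finite A -> exists f : A -> nat, Injective f.
Proof.
  intros [l Hl].
  assert (Hpos : forall a, exists n, nth_error l n = Some a) by (intro a; apply In_nth_error, Hl).
  exists (fun a => proj1_sig (constructive_indefinite_description _ (Hpos a))).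
  intros a b. simpl.
  destruct (constructive_indefinite_description _ (Hpos a)) as [na Ha].
  destruct (constructive_indefinite_description _ (Hpos b)) as [nb Hb].
  simpl; intros ->. congruence.
Qed.

Lemma enumeration_of_nat_injection (X : Type) (x0 : X) (f : X -> nat) :
  Injective f -> exists e : nat -> X, Surjective e.
Proof.
  intro Hf. exists (fun n => epsilon (inhabits x0) (fun t => f t = n)).
  intro t. exists (f t). apply Hf.
  exact (epsilon_spec (inhabits x0) (fun u => f u = f t) (ex_intro _ t eq_refl)).
Qed.

Section Encoding.
Variable A : Type.
Variable idx : A -> nat.
Hypothesis idx_inj : Injective idx.

Fixpoint enc_form (p : form A) : nat :=
  match p with
  | Var n => pair_nat 0 n
  | Neg q => pair_nat 1 (enc_form q)
  | And q r => pair_nat 2 (pair_nat (enc_form q) (enc_form r))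
  | K a q => pair_nat 3 (pair_nat (idx a) (enc_form q))
  | Int q => pair_nat 4 (enc_form q)
  | Ann q r => pair_nat 5 (pair_nat (enc_form q) (enc_form r))
  | Box q => pair_nat 6 (enc_form q)
  end.

Fixpoint enc_nform (xi : nform A) : nat :=
  match xi with
  | NHole _ => pair_nat 0 0
  | NImp p xi' => pair_nat 1 (pair_nat (enc_form p) (enc_nform xi'))
  | NK a xi' => pair_nat 2 (pair_nat (idx a) (enc_nform xi'))
  | NInt xi' => pair_nat 3 (enc_nform xi')
  | NAnn p xi' => pair_nat 4 (pair_nat (enc_form p) (enc_nform xi'))
  end.

Ltac split_pairs :=
  repeat match goal with
  | H : pair_nat _ _ = pair_nat _ _ |- _ => apply pair_nat_inj in H; destruct H
  end.

Lemma enc_form_inj : Injective enc_form.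
Proof.
  intro p; induction p; intros [] H; simpl in H; split_pairs; try discriminate;
  repeat match goal with
  | H : enc_form ?p = enc_form _, IH : forall q, enc_form ?p = enc_form q -> _ |- _ => apply IH in H
  | H : idx _ = idx _ |- _ => apply idx_inj in H
  end; subst; auto.
Qed.

Lemma enc_nform_inj : Injective enc_nform.
Proof.
  intro xi; induction xi; intros [] H; simpl in H; split_pairs; try discriminate;
  repeat match goal with
  | H : enc_nform ?p = enc_nform _, IH : forall q, enc_nform ?p = enc_nform q -> _ |- _ => apply IH in H
  | H : enc_form _ = enc_form _ |- _ => apply enc_form_inj in H
  | H : idx _ = idx _ |- _ => apply idx_inj in H
  end; subst; auto.
Qed.

Lemma enc_triple_inj :
  Injective (fun t : form A * nform A * form A =>
               let '(f, xi, c) := t in pair_nat (enc_form f) (pair_nat (enc_nform xi) (enc_form c))).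
Proof.
  intros [[f xi] c] [[f' xi'] c'] H.
  apply pair_nat_inj in H as [Hf H]. apply pair_nat_inj in H as [Hxi Hc].
  apply enc_form_inj in Hf, Hc. apply enc_nform_inj in Hxi. subst; auto.
Qed.

End Encoding.

Lemma triples_enumerable (A : Type) :
  Finite A -> exists e : nat -> form A * nform A * form A, Surjective e.
Proof.
  intro Hl. destruct (finite_nat_injection Hl) as [idx Hidx].
  exact (enumeration_of_nat_injection (Var 0, NHole A, Var 0) (enc_triple_inj Hidx)).
Qed.

Ltac taut := intro; unfold Imp, Iff, Bot; simpl;
  repeat match goal with
  | |- context [peval ?v ?p] => destruct (peval v p)
  | |- context [?v (Var 0)] => destruct (v (Var 0))
  end; reflexivity.

Lemma consistent_theory_contradiction (A : Type) (y : fset A) (p : form A) :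
  consistent_theory y -> y p -> y (Neg p) -> False.
Proof.
  intros [[Hyt [Hymp _]] Hybot] Hp Hnp. apply Hybot.
  apply Hymp with p; auto. apply Hymp with (Neg p); auto.
  apply Hyt, ax_taut. taut.
Qed.

Section Lindenbaum.
Variable A : Type.
Variable T : fset A.
Hypothesis HT : theory T.

Lemma theory_thm p : thm p -> T p.
Proof. apply HT. Qed.

Lemma theory_taut p : tautology p -> T p.
Proof. intro H. apply theory_thm, ax_taut, H. Qed.

Lemma theory_taut1 a b : tautology (Imp a b) -> T a -> T b.
Proof. intros Ht Ha. apply HT with a; [apply theory_taut|]; auto. Qed.

Lemma theory_taut2 a b c : tautology (Imp a (Imp b c)) -> T a -> T b -> T c.
Proof. intros Ht Ha Hb. apply HT with b; [apply theory_taut1 with a|]; auto. Qed.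

Lemma theory_imp_trans a b c : T (Imp a b) -> T (Imp b c) -> T (Imp a c).
Proof. apply theory_taut2; taut. Qed.

Definition consistent_with (c : form A) : Prop := ~ T (Imp c (Bot A)).

Definition refines (c c' : form A) : Prop := consistent_with c' /\ T (Imp c' c).

Lemma refines_trans c c' c'' : refines c c' -> refines c' c'' -> refines c c''.
Proof. intros [_ H1] [H2 H3]. split; [|apply theory_imp_trans with c']; auto. Qed.

Lemma refines_decide c f :
  consistent_with c -> exists c', refines c c' /\ (T (Imp c' f) \/ T (Imp c' (Neg f))).
Proof.
  intro Hc. destruct (classic (consistent_with (And c f))) as [Hf|Hf].
  - exists (And c f). split; [split|left]; auto; apply theory_taut; taut.
  - apply NNPP in Hf. exists (And c (Neg f)). repeat split.
    + intro H. apply Hc. revert Hf H. apply theory_taut2; taut.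
    + apply theory_taut; taut.
    + right; apply theory_taut; taut.
Qed.

(* If no instance [xi([q] ch)] can consistently be refuted below [c], all of
   them follow from [c]; (DR5) for the necessity form [c -> xi] then yields
   [c -> xi(Box ch)]. *)
Lemma refines_witness c xi ch :
  consistent_with c ->
  exists c', refines c c' /\
    (T (Imp c' (fill xi (Box ch))) \/
     exists q, boxfree q /\ T (Imp c' (Neg (fill xi (Ann q ch))))).
Proof.
  intro Hc.
  destruct (classic (exists q, boxfree q /\
                      consistent_with (And c (Neg (fill xi (Ann q ch))))))
    as [[q [Hq Hcq]]|Hno].
  - exists (And c (Neg (fill xi (Ann q ch)))). repeat split; auto.
    + apply theory_taut; taut.
    + right. exists q. split; auto. apply theory_taut; taut.
  - assert (Hbox : T (Imp c (fill xi (Box ch)))).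
    { change (T (fill (NImp c xi) (Box ch))). apply HT. intros q Hq.
      assert (Hq' : T (Imp (And c (Neg (fill xi (Ann q ch)))) (Bot A))).
      { apply NNPP. intro Hn. apply Hno. eauto. }
      revert Hq'. apply theory_taut1; taut. }
    exists c. repeat split; auto; apply theory_taut; taut.
Qed.

Definition settles (t : form A * nform A * form A) (c : form A) : Prop :=
  let '(f, xi, ch) := t in
  (T (Imp c f) \/ T (Imp c (Neg f))) /\
  (T (Imp c (fill xi (Box ch))) \/
   exists q, boxfree q /\ T (Imp c (Neg (fill xi (Ann q ch))))).

Lemma refines_settle c t : consistent_with c -> exists c', refines c c' /\ settles t c'.
Proof.
  destruct t as [[f xi] ch]. intro Hc.
  destruct (refines_decide f Hc) as [c1 [[Hc1 Hc1c] Hf]].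
  destruct (refines_witness xi ch Hc1) as [c2 [Hc12 Hw]].
  exists c2. split; [apply refines_trans with c1; [split|]; auto|].
  split; auto.
  destruct Hf; [left|right]; apply theory_imp_trans with c1; auto; apply Hc12.
Qed.

Variable e : nat -> form A * nform A * form A.
Hypothesis e_surj : Surjective e.
Variable c0 : form A.
Hypothesis Hc0 : consistent_with c0.

Definition next (c : form A) (n : nat) : form A :=
  epsilon (inhabits c) (fun c' => refines c c' /\ settles (e n) c').

Lemma next_spec c n : consistent_with c -> refines c (next c n) /\ settles (e n) (next c n).
Proof.
  intro Hc. apply (epsilon_spec (inhabits c) (fun c' => refines c c' /\ settles (e n) c')).
  apply refines_settle, Hc.
Qed.

Fixpoint chain (n : nat) : form A :=
  match n with
  | 0 => c0
  | S m => next (chain m) m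
  end.

Lemma chain_step n : refines (chain n) (chain (S n)) /\ settles (e n) (chain (S n)).
Proof.
  induction n as [|n IH]; apply next_spec; [exact Hc0|apply IH].
Qed.

Lemma chain_antitone n m : n <= m -> T (Imp (chain m) (chain n)).
Proof.
  induction 1 as [|m _ IH].
  - apply theory_taut; taut.
  - apply theory_imp_trans with (chain m); auto. apply chain_step.
Qed.

Definition limit : fset A := fun p => exists n, T (Imp (chain n) p).

Lemma limit_at {n : nat} {p : form A} : T (Imp (chain n) p) -> limit p.
Proof. intro H. exists n. exact H. Qed.

Lemma limit_taut2 a b c : tautology (Imp a (Imp b c)) -> limit a -> limit b -> limit c.
Proof.
  intros Ht [n Hn] [m Hm]. exists (max n m).
  assert (Hn' := theory_imp_trans (chain_antitone (Nat.le_max_l n m)) Hn).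
  assert (Hm' := theory_imp_trans (chain_antitone (Nat.le_max_r n m)) Hm).
  revert Hn' Hm'. apply theory_taut2.
  intro v. specialize (Ht v). revert Ht. unfold Imp; simpl.
  destruct (peval v a), (peval v b), (peval v c), (peval v (chain (max n m))); auto.
Qed.

Lemma limit_not_bot : ~ limit (Bot A).
Proof.
  intros [n Hn]. destruct n as [|n]; [exact (Hc0 Hn)|]. exact (proj1 (proj1 (chain_step n)) Hn).
Qed.

Lemma limit_of_theory p : T p -> limit p.
Proof. intro H. exists 0. revert H. apply theory_taut1; taut. Qed.

Lemma limit_c0 : limit c0.
Proof. exists 0. apply theory_taut; taut. Qed.

Lemma limit_settles t : let '(f, xi, ch) := t in
  (limit f \/ limit (Neg f)) /\
  (limit (fill xi (Box ch)) \/ exists q, boxfree q /\ limit (Neg (fill xi (Ann q ch)))).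
Proof.
  destruct (e_surj t) as [n <-]. assert (Hs := proj2 (chain_step n)).
  destruct (e n) as [[f xi] ch].
  destruct Hs as [H1 [H2|[q [Hq H2]]]]; split.
  - destruct H1 as [H1|H1]; [left|right]; exact (limit_at H1).
  - left; exact (limit_at H2).
  - destruct H1 as [H1|H1]; [left|right]; exact (limit_at H1).
  - right; exists q; split; [exact Hq|exact (limit_at H2)].
Qed.

Lemma limit_theory : theory limit.
Proof.
  split; [|split].
  - intros p Hp. apply limit_of_theory, theory_thm, Hp.
  - intros p q H1 H2. revert H1 H2. apply limit_taut2; taut.
  - intros xi ch H. destruct (proj2 (limit_settles (Var 0, xi, ch))) as [D|[q [Hq D]]]; auto.
    exfalso. apply limit_not_bot. refine (limit_taut2 _ (H q Hq) D); taut.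
Qed.

Lemma limit_maximal : maximally_consistent_theory limit.
Proof.
  split; [split; [apply limit_theory|apply limit_not_bot]|].
  intros s Hs [p [Hp Hnp]] [z [Hz Hsz]].
  destruct (proj1 (limit_settles (p, NHole A, Var 0))) as [D|D]; [tauto|].
  exact (consistent_theory_contradiction p Hz (Hsz p Hp) (Hsz _ (Hs _ D))).
Qed.

End Lindenbaum.

Lemma lindenbaum (A : Type) (T : fset A) (c : form A) :
  (exists e : nat -> form A * nform A * form A, Surjective e) ->
  theory T -> consistent_with T c ->
  exists y, maximally_consistent_theory y /\ (forall p, T p -> y p) /\ y c.
Proof.
  intros [e He] HT Hc. exists (limit T e c). split; [|split].
  - apply limit_maximal; auto.
  - intros p. apply limit_of_theory; auto.
  - apply limit_c0; auto.
Qed.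

Lemma Kset_theory (A : Type) (i : A) (x : fset A) : theory x -> theory (Kset i x).
Proof.
  intros [Hxt [Hxmp Hxdr]]. unfold Kset. split; [|split].
  - intros p Hp. apply Hxt, r_necK, Hp.
  - intros p q H1 H2. apply Hxmp with (K i p); auto. apply Hxmp with (K i (Imp p q)); auto.
    apply Hxt, ax_K.
  - intros xi c H. change (x (fill (NK i xi) (Box c))). apply Hxdr. exact H.
Qed.

Lemma Kset_consistent_neg (A : Type) (i : A) (x : fset A) (phi : form A) :
  theory x -> ~ x (K i phi) -> consistent_with (Kset i x) (Neg phi).
Proof.
  intros [Hxt [Hxmp _]] Hphi H. apply Hphi. unfold Kset in H.
  apply Hxmp with (K i (Imp (Neg phi) (Bot A))); auto.
  apply Hxmp with (K i (Imp (Imp (Neg phi) (Bot A)) phi)); [apply Hxt, ax_K|].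
  apply Hxt, r_necK, ax_taut. taut.
Qed.

Theorem mainTheorem19 (A : Type) (HAfin : exists l : list A, forall a, In a l)
  (HAne : inhabited A) (x : fset A) (phi : form A) (i : A) :
  theory x -> ~ x (K i phi) ->
  exists y : fset A, maximally_consistent_theory y /\
    (forall p, Kset i x p -> y p) /\ ~ y phi.
Proof.
  intros Hx Hphi.
  destruct (lindenbaum (triples_enumerable HAfin) (Kset_theory i Hx)
                       (Kset_consistent_neg i phi Hx Hphi)) as [y [Hy [HKy Hnphi]]].
  exists y. split; [|split]; auto.
  intro Hyphi. exact (consistent_theory_contradiction phi (proj1 Hy) Hyphi Hnphi).
Qed.
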